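(* Let $c_b=\sum_{a=b+1}^{2b}|c_{a,b}|$. There is a constant $C_3<\infty$ such that $c_b\le C_3^b\, b!$ for all $b\ge1$.
   Context: The $c_{a,b}$, $(a,b)\in I=\{b\ge1,\ b+1\le a\le 2b\}$, are the lace-expansion coefficients for self-avoiding walk on $\mathbb Z^d$ (with memory $\tau\ge a$): let $f_\tau(a,N,D)$ be the number of equivalence classes, under the $2^D D!$ signed coordinate permutations of $\mathbb Z^D$, of memory-$\tau$ lace graphs of length $a$, type $N$ and dimensionality exactly $D$ (lace graphs are nearest-neighbour walks with additional structure as in the Brydges–Spencer lace expansion; the set of lace graphs is invariant under lattice symmetries, there are at most $(2D)^a$ lace graphs of length $a$ in $\mathbb Z^D$ in total over all types, and a lace graph of dimensionality $D$ has length at least $2D$). With $s=1/(2d)$, $c_{a,b,N}$ is defined by $\sum_{D=1}^{\lfloor a/2\rfloor}f_\tau(a,N,D)\,2d(2d-2)\cdots(2d-2D+2)=\sum_{b=\lceil a/2\rceil}^{a-1}c_{a,b,N}s^{b-a}$, and $c_{a,b}=\sum_{N\ge1}(-1)^{N+1}c_{a,b,N}$. *)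

From HB Require Import structures.
From mathcomp Require Import all_boot all_order all_algebra.
Set Implicit Arguments. Unset Strict Implicit. Unset Printing Implicit Defensive.
Import Order.TTheory GRing.Theory Num.Theory.

Local Open Scope ring_scope.

(* The polynomial 2d(2d-2)...(2d-2D+2) in the variable x = 2d = s^{-1}. *)
Definition falling2 (D : nat) : {poly int} :=
  \prod_(j < D) ('X - (2 * j)%N%:R%:P).

(* f a N D = f_tau(a,N,D): number of equivalence classes (under the 2^D D!
   signed coordinate permutations) of memory-tau lace graphs of length a,
   type N, dimensionality exactly D. *)

Definition lacePoly (f : nat -> nat -> nat -> nat) (a N : nat) : {poly int} :=
  \sum_(1 <= D < (a./2).+1) (f a N D)%:R *: falling2 D.

(* c_{a,b,N} = coefficient of s^{b-a} = (2d)^{a-b}. *)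
Definition c_abN (f : nat -> nat -> nat -> nat) (a b N : nat) : int :=
  (lacePoly f a N)`_(a - b).

(* c_{a,b} = sum_{N>=1} (-1)^{N+1} c_{a,b,N}; types satisfy N <= a. *)
Definition c_ab (f : nat -> nat -> nat -> nat) (a b : nat) : int :=
  \sum_(1 <= N < a.+1) (-1) ^+ N.+1 * c_abN f a b N.

Definition c_b (f : nat -> nat -> nat -> nat) (b : nat) : nat :=
  (\sum_(b.+1 <= a < (2 * b).+1) `|c_ab f a b|%N)%N.

From HB Require Import structures.
From mathcomp Require Import all_boot all_order all_algebra zify ring.
Set Implicit Arguments.
Unset Strict Implicit.
Unset Printing Implicit Defensive.

Import Order.TTheory GRing.Theory Num.Theory.

(* Each lace-graph class of dimensionality D enters c_{a,b} through the coefficient of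
   x^{a-b} in falling2 D = prod_{j<D} (x - 2j), which vanishes unless a - b <= D and is
   otherwise at most 2^D (2D)^{D-(a-b)}; the counting hypothesis bounds the number of
   classes by (2D)^a / (2^D D!).  So dimension D contributes at most (2D)^{D+b} / D!,
   and n^n <= 4^n n! turns this into 64^b b!.  With at most b dimensions D <= a/2 and
   b lengths a, c_b <= b^2 64^b b! <= 256^b b!. *)

Lemma leq_abszD (x y : int) : `|(x + y)%R| <= `|x| + `|y|.
Proof. by rewrite -lez_nat PoszD !abszE ler_normD. Qed.

Lemma leq_absz_sum I (r : seq I) (P : pred I) (F : I -> int) :
  `|(\sum_(i <- r | P i) F i)%R| <= \sum_(i <- r | P i) `|F i|.
Proof.
elim/big_rec2: _ => [|i m y _ lemy]; first by [].
exact: leq_trans (leq_abszD _ _) (leq_add (leqnn _) lemy).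
Qed.

Lemma expn_leq_ffact m n : m ^ n <= (m + n) ^_ n.
Proof.
rewrite ffact_prod -{1}(card_ord n) -prod_nat_const.
by apply: leq_prod => i _; have := ltn_ord i; lia.
Qed.

Lemma bin_leq_exp2 n k : 'C(n, k) <= 2 ^ n.
Proof.
elim: n k => [|n IHn] [|k]; rewrite ?bin0 ?expn_gt0 //.
by rewrite binS expnS mul2n -addnn leq_add.
Qed.

Lemma expn_self_leq_fact n : n ^ n <= n`! * 4 ^ n.
Proof.
apply: leq_trans (expn_leq_ffact n n) _.
rewrite -bin_ffact mulnC leq_mul2l (_ : 4 = 2 ^ 2) // -expnM addnn -mul2n mulnC.
by rewrite bin_leq_exp2 orbT.
Qed.

Lemma expn_leq_fact_exp D b : D <= b ->
  (2 * D) ^ (D + b) <= D`! * (64 ^ b * b`!).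
Proof.
move=> le_Db.
have le_2exp : 2 ^ (D + b) <= 4 ^ b.
  by rewrite (_ : 4 = 2 ^ 2) // -expnM leq_pexp2l //; lia.
have le_DD_fact : D ^ D <= D`! * 4 ^ b.
  by apply: leq_trans (expn_self_leq_fact D) _; rewrite leq_mul2l leq_pexp2l ?orbT.
have le_Db_fact : D ^ b <= b`! * 4 ^ b.
  apply: leq_trans (expn_self_leq_fact b).
  by have [->|b_gt0] := posnP b; rewrite ?expn0 ?leq_exp2r.
rewrite expnMn [D ^ _]expnD mulnA.
apply: leq_trans (leq_mul (leq_mul le_2exp le_DD_fact) le_Db_fact) _.
rewrite (_ : 64 = 4 * 4 * 4) // !expnMn.
by apply: eq_leq; ring.
Qed.

Lemma leq_absz_coef_prod_XsubC (M : nat) (rs : seq int) :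
  all (fun x => `|x| <= M) rs -> forall k,
  `|((\prod_(x <- rs) ('X - x%:P))`_k)%R| <= 2 ^ size rs * M ^ (size rs - k).
Proof.
elim: rs => [|x rs IHrs] /=; first by move=> _ [|k]; rewrite big_nil coef1.
case/andP=> le_xM {}/IHrs le_coef k; rewrite big_cons mulrBl coefB coefXM coefCM.
set p := (\prod_(_ <- rs) _)%R; set n := size rs.
case: k => [|k] /=.
  rewrite sub0r abszN abszM mulnC; apply: leq_trans (leq_mul (le_coef 0) le_xM) _.
  by rewrite subn0 -mulnA -expnSr leq_mul2r leq_exp2l // leqnSn orbT.
rewrite subSS; apply: leq_trans (leq_abszD _ _) _; rewrite abszN abszM.
have [lt_kn | le_nk] := ltnP k n.
  rewrite expnS mul2n -addnn mulnDl; apply: leq_add; first exact: le_coef.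
  by apply: leq_trans (leq_mul le_xM (le_coef k.+1)) _; rewrite mulnCA -expnS subnSK.
have p_k1 : (p`_k.+1 = 0)%R by rewrite nth_default // size_prod_XsubC.
by rewrite p_k1 muln0 addn0 (leq_trans (le_coef k)) // leq_mul2r leq_pexp2l ?orbT.
Qed.

Lemma falling2E D :
  falling2 D = (\prod_(x <- [seq (2 * j)%N%:R | j <- iota 0 D]) ('X - x%:P))%R.
Proof. by rewrite big_map -[in RHS](subn0 D) big_mkord. Qed.

Lemma size_falling2 D : size (falling2 D) = D.+1.
Proof. by rewrite falling2E size_prod_XsubC ?size_map size_iota. Qed.

Lemma leq_absz_coef_falling2 D k :
  `|((falling2 D)`_k)%R| <= 2 ^ D * (2 * D) ^ (D - k).
Proof.
have := @leq_absz_coef_prod_XsubC (2 * D) [seq ((2 * j)%:R)%R | j <- iota 0 D].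
rewrite -falling2E size_map size_iota; apply; apply/allP => x /mapP[j].
by rewrite mem_iota add0n => /ltnW le_jD ->; rewrite natz absz_nat leq_mul2l le_jD orbT.
Qed.

Lemma leq_absz_coef_falling2_mul a b D S : D <= b <= a ->
  2 ^ D * D`! * S <= (2 * D) ^ a ->
  `|((falling2 D)`_(a - b))%R| * S <= 64 ^ b * b`!.
Proof.
move=> /andP[le_Db le_ba] le_S.
have [lt_Dk | le_kD] := ltnP D (a - b); first by rewrite nth_default ?size_falling2.
rewrite -(leq_pmul2l (fact_gt0 D)); apply: leq_trans (expn_leq_fact_exp le_Db).
have -> : D + b = D - (a - b) + a by lia.
apply: (@leq_trans (D`! * (2 ^ D * (2 * D) ^ (D - (a - b)) * S))).
  by rewrite leq_mul2l leq_mul2r leq_absz_coef_falling2 !orbT.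
have -> : D`! * (2 ^ D * (2 * D) ^ (D - (a - b)) * S) =
          (2 * D) ^ (D - (a - b)) * (2 ^ D * D`! * S) by ring.
by rewrite expnD leq_mul2l le_S orbT.
Qed.

Lemma leq_absz_c_ab_falling2 f a b :
  `|c_ab f a b| <= \sum_(1 <= D < (a./2).+1)
                      `|((falling2 D)`_(a - b))%R| * \sum_(1 <= N < a.+1) f a N D.
Proof.
apply: leq_trans (leq_absz_sum _ _ _) _.
under eq_bigr do rewrite abszMsign.
under [X in _ <= X]eq_bigr do rewrite big_distrr /=.
rewrite exchange_big /=; apply: leq_sum => N _.
rewrite /c_abN /lacePoly coef_sum; apply: leq_trans (leq_absz_sum _ _ _) _.
by apply: leq_sum => D _; rewrite coefZ abszM natz absz_nat mulnC.
Qed.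

Lemma leq_absz_c_ab f a b :
  (forall a D, 1 <= D ->
     2 ^ D * D`! * \sum_(1 <= N < a.+1) f a N D <= (2 * D) ^ a) ->
  b < a <= 2 * b -> `|c_ab f a b| <= b * (64 ^ b * b`!).
Proof.
move=> count_laces /andP[lt_ba le_a2b].
have le_half : a./2 <= b by rewrite -[b in _ <= b]doubleK -mul2n half_leq.
apply: leq_trans (leq_absz_c_ab_falling2 f a b) _.
apply: leq_trans (leq_mul le_half (leqnn (64 ^ b * b`!))).
have -> : a./2 * (64 ^ b * b`!) = \sum_(1 <= D < (a./2).+1) 64 ^ b * b`!.
  by rewrite sum_nat_const_nat subSS subn0.
rewrite [X in X <= _]big_nat_cond [X in _ <= X]big_nat_cond.
apply: leq_sum => D /andP[/andP[D_gt0]]; rewrite ltnS => le_Dhalf _.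
apply: leq_absz_coef_falling2_mul; last exact: count_laces.
by rewrite (leq_trans le_Dhalf le_half) ltnW.
Qed.

Theorem lemma4 (f : nat -> nat -> nat -> nat)
  (Htype : forall a N D, (a < N)%N -> f a N D = 0%N)
  (Hcount : forall a D, (1 <= D)%N ->
     (2 ^ D * D`! * \sum_(1 <= N < a.+1) f a N D <= (2 * D) ^ a)%N) :
  exists C : nat, forall b : nat, (1 <= b)%N -> (c_b f b <= C ^ b * b`!)%N.
Proof.
exists 256 => b _.
have le_terms : c_b f b <= \sum_(b.+1 <= a < (2 * b).+1) b * (64 ^ b * b`!).
  rewrite [X in X <= _]big_nat_cond [X in _ <= X]big_nat_cond.
  by apply: leq_sum => a /andP[range_a _]; apply: leq_absz_c_ab.
apply: leq_trans le_terms _.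
rewrite sum_nat_const_nat (_ : (2 * b).+1 - b.+1 = b); last by lia.
have le_bb : b * b <= 4 ^ b.
  by rewrite (_ : 4 = 2 * 2) // expnMn leq_mul // ltnW // ltn_expl.
by rewrite mulnA (_ : 256 = 4 * 64) // expnMn -[X in _ <= X]mulnA leq_mul2r le_bb orbT.
Qed.
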